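(* Let $q,m$ be positive integers with $q\ge 2$. Let $\mathbf{B}^{q,m}=[b_{j,k}]$ be the $(q-1)q^m\times q(m+1)$ array with rows indexed by $j\in[0,(q-1)q^m)$ and columns by $k\in[0,q(m+1))$, defined as follows. Write $j=(j_m,j_{m-1},\dots,j_0)_q$ (so $j_m\in[0,q-1)$) and $k=uq+v$ with $0\le u\le m$, $0\le v<q$. If $0\le u<m$: $$b_{j,k}=\begin{cases} (j_{m-1},\dots,j_{u+1},\ j_u+j_m+1,\ j_{u-1},\dots,j_0)_q, & j_u=v,\\ *, & j_u\ne v.\end{cases}$$ If $u=m$: $$b_{j,k}=\begin{cases} (j_{m-1},\dots,j_0)_q, & j_0+\cdots+j_{m-1}+j_m=v-1,\\ *, & j_0+\cdots+j_{m-1}+j_m\ne v-1,\end{cases}$$ where all additions and subtractions of digits (including in the conditions) are performed modulo $q$ (with results in $[0,q)$). Then $\mathbf{B}^{q,m}$ is a $(q-1)(m+1)$-regular $(q(m+1),\,(q-1)q^m,\,(q-1)^2q^{m-1},\,q^m)$ PDA, and its rate $S/F$ equals $1/(q-1)$.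
   Context: Notation: $[i,j)=\{i,\dots,j-1\}$. For an integer $s$ with $s=\sum_{l=0}^{n-1}s_lq^l$, $s_l\in[0,q)$, we write $s=(s_{n-1},\dots,s_0)_q$ (the $q$-ary representation; the leftmost digit is most significant). For positive integers $K,F,Z,S$ and an integer $g$, an $F\times K$ array $\mathbf{P}=[p_{j,k}]$ whose entries are either a special symbol $*$ or one of the integers $0,1,\dots,S-1$ is a $g$-regular $(K,F,Z,S)$ PDA if: (C1) the symbol $*$ appears exactly $Z$ times in each column; (C2') each integer in $[0,S)$ appears exactly $g$ times in $\mathbf{P}$; (C3) for any two distinct entries with $p_{j_1,k_1}=p_{j_2,k_2}=s$ an integer, we have $j_1\neq j_2$, $k_1\neq k_2$, and $p_{j_1,k_2}=p_{j_2,k_1}=*$. The rate of such a PDA (i.e. of its associated caching scheme) is $R=S/F$. *)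

From mathcomp Require Import all_boot all_order all_algebra.
Set Implicit Arguments. Unset Strict Implicit. Unset Printing Implicit Defensive.

(* An F x K array: rows j < F, columns k < K; entry None = '*', Some s = integer s. *)
Definition array := nat -> nat -> option nat.

Definition regular_PDA (g K F Z S : nat) (P : array) : Prop :=
  [/\ (forall (j : 'I_F) (k : 'I_K),
         if P j k is Some s then s < S else true),
      (forall k : 'I_K, #|[set j : 'I_F | P j k == None]| = Z),
      (forall s, s < S ->
         #|[set jk : 'I_F * 'I_K | P jk.1 jk.2 == Some s]| = g) &
      (forall (j1 j2 : 'I_F) (k1 k2 : 'I_K) (s : nat),
         (j1, k1) <> (j2, k2) -> P j1 k1 = Some s -> P j2 k2 = Some s ->
         [/\ j1 <> j2, k1 <> k2, P j1 k2 = None & P j2 k1 = None])].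

Definition rate (F S : nat) : rat := (S%:Q / F%:Q)%R.

Definition digit (q j l : nat) : nat := (j %/ q ^ l) %% q.

Definition B (q m : nat) : array := fun j k =>
  let u := k %/ q in
  let v := k %% q in
  if u < m then
    if digit q j u == v then
      Some (\sum_(l < m)
              (if l == u :> nat then (digit q j u + digit q j m + 1) %% q
               else digit q j l) * q ^ l)
    else None
  else
    if (\sum_(l < m.+1) digit q j l) %% q == (v + q - 1) %% q then
      Some (\sum_(l < m) digit q j l * q ^ l)
    else None.

From mathcomp Require Import all_boot all_order all_algebra.
From mathcomp Require Import zify ring.
Set Implicit Arguments. Unset Strict Implicit. Unset Printing Implicit Defensive.

(* Write a column index as k = u q + v with block u <= m.  Row j has an integer in
   block u exactly in the column whose v is the phase of j, namely j_u for u < m and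
   1 + j_0 + ... + j_m for u = m, and that integer has the digit vector [label u j]:
   the digits of j below m, with j_u replaced by j_u + j_m + 1 (mod q) when u < m.
   The phase of j in block u is a fixed function [excluded u] of its label in any
   other block, but, because j_m < q - 1, it is never [excluded u] of its own label
   in block u; and phase and label in one block together determine j.  This gives
   (C3) directly.  It also shows that an integer s occurs at most once per column
   and never in the column v = excluded u s of block u, so at most (q - 1)(m + 1)
   times; counting all integer entries with (C1) shows that every s attains this
   bound. *)

Lemma sum_nat_divmod a b (F : nat -> nat -> nat) : 0 < b ->
  \sum_(0 <= i < a * b) F (i %/ b) (i %% b) =
  \sum_(0 <= x < a) \sum_(0 <= y < b) F x y.
Proof.
move=> b_gt0; elim: a => [|a IH]; first by rewrite mul0n !big_geq.
rewrite big_nat_recr //= -IH mulSnr (big_cat_nat _ (leq_addr b (a * b))) //=.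
congr (_ + _); rewrite -{1}(add0n (a * b)) big_addn addKn.
apply: eq_big_nat => y /andP[_ lt_yb].
by rewrite addnC divnMDl // divn_small // addn0 modnMDl modn_small.
Qed.

Lemma sum_nat_neq n t : t < n -> \sum_(0 <= i < n) (i != t) = n.-1.
Proof.
move=> lt_tn; rewrite -big_mkcond sum1_count /=.
have := count_predC (pred1 t) (index_iota 0 n).
rewrite (count_uniq_mem _ (iota_uniq _ _)) mem_iota size_iota subn0 add0n lt_tn leq0n.
by move=> e; rewrite -[in RHS]e add1n.
Qed.

Lemma sum_nat_mod_shift n c (F : nat -> nat) :
  \sum_(0 <= i < n) F ((i + c) %% n) = \sum_(0 <= i < n) F i.
Proof.
elim: c => [|c IH].
  by apply: eq_big_nat => i /andP[_ lt_in]; rewrite addn0 modn_small.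
rewrite -{}IH; set G := fun i => F ((i + c) %% n).
have: G 0 + \sum_(0 <= i < n) G i.+1 = \sum_(0 <= i < n) G i + G n.
  by rewrite -big_nat_recl // -big_nat_recr.
by rewrite /G add0n modnDl addnC => /addIn <-; under eq_bigr do rewrite -addSnnS.
Qed.

Lemma modn_addr_neq d x c : 0 < c < d -> (x + c) %% d != x %% d.
Proof. by move=> /andP[c_gt0 lt_cd]; rewrite -{2}(addn0 x) eqn_modDl mod0n modn_small // -lt0n. Qed.

Lemma card_set_sum (T : finType) (P : pred T) : #|[set x | P x]| = \sum_x P x.
Proof. by rewrite -sum1dep_card big_mkcond. Qed.

Lemma modnD1_eq d x v : 0 < d -> v < d ->
  ((x + 1) %% d == v) = (x %% d == (v + d - 1) %% d).
Proof.
move=> d_gt0 lt_vd; rewrite -{1}(modn_small lt_vd) -(eqn_modDr (d - 1)) -addnA subnKC //.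
by rewrite modnDr addnBA.
Qed.

Section QaryDigits.
Variable q : nat.

Definition from_digits n (f : nat -> nat) := \sum_(l < n) f l * q ^ l.

Lemma eq_from_digits n f g : (forall l, l < n -> f l = g l) ->
  from_digits n f = from_digits n g.
Proof. by move=> eq_fg; apply: eq_bigr => l _; rewrite eq_fg. Qed.

Lemma from_digitsS n f :
  from_digits n.+1 f = f 0 + from_digits n (fun l => f l.+1) * q.
Proof.
rewrite /from_digits big_ord_recl big_distrl /= expn0 muln1; congr (_ + _).
by apply: eq_bigr => l _; rewrite expnS mulnCA mulnC.
Qed.

Lemma from_digits_lt n f : (forall l, l < n -> f l < q) -> from_digits n f < q ^ n.
Proof.
elim: n f => [|n IH] f lt_fq; first by rewrite /from_digits big_ord0.
rewrite from_digitsS expnSr.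
have lt_f0 := lt_fq 0 isT; have := IH (fun l => f l.+1) (fun l => lt_fq l.+1).
move: (from_digits _ _) (q ^ n) => x y lt_xy; nia.
Qed.

Lemma digit0 j : digit q j 0 = j %% q.
Proof. by rewrite /digit expn0 divn1. Qed.

Lemma digitS j l : digit q j l.+1 = digit q (j %/ q) l.
Proof. by rewrite /digit expnS divnMA. Qed.

Hypothesis q_gt0 : 0 < q.

Let expn_gt0_q n : 0 < q ^ n. Proof. by rewrite expn_gt0 q_gt0. Qed.

Lemma digit_lt j l : digit q j l < q.
Proof. by rewrite ltn_pmod. Qed.

Lemma digit_top_lt a n j : j < a * q ^ n -> a <= q -> digit q j n < a.
Proof.
move=> lt_j le_aq.
have lt_div : j %/ q ^ n < a by rewrite ltn_divLR.
by rewrite /digit modn_small // (leq_trans lt_div).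
Qed.

Lemma digit_from_digits n f l : (forall i, i < n -> f i < q) -> l < n ->
  digit q (from_digits n f) l = f l.
Proof.
elim: n f l => [|n IH] f [|l] lt_fq // lt_ln; rewrite from_digitsS addnC.
  by rewrite digit0 modnMDl modn_small ?lt_fq.
by rewrite digitS divnMDl // divn_small ?lt_fq // addn0 IH // => i; apply: (lt_fq i.+1).
Qed.

Lemma modnX_from_digits j n : j %% q ^ n = from_digits n (digit q j).
Proof.
elim: n j => [|n IH] j; first by rewrite modn1 /from_digits big_ord0.
rewrite from_digitsS digit0 (eq_from_digits (g := digit q (j %/ q))); last first.
  by move=> l _; rewrite digitS.
rewrite -IH {1}(divn_eq j q) {1}(divn_eq (j %/ q) (q ^ n)) expnSr.
rewrite mulnDl -mulnA -addnA modnMDl modn_small addnC //.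
have := ltn_pmod (j %/ q) (expn_gt0_q n); have := ltn_pmod j q_gt0.
move: (j %% q) ((j %/ q) %% q ^ n) (q ^ n) => x y z; nia.
Qed.

Lemma digit_ext n a b : a < q ^ n -> b < q ^ n ->
  (forall l, l < n -> digit q a l = digit q b l) -> a = b.
Proof.
move=> lt_a lt_b eq_ab.
by rewrite -(modn_small lt_a) -(modn_small lt_b) !modnX_from_digits; apply: eq_from_digits.
Qed.

Lemma sum_digit_neq a u v : v < q ->
  \sum_(0 <= j < a * q ^ u.+1) (digit q j u != v) = a * q.-1 * q ^ u.
Proof.
move=> lt_vq; rewrite expnS mulnA /digit.
rewrite (sum_nat_divmod _ (fun x _ => (x %% q != v : nat))) //=.
under eq_bigr do rewrite sum_nat_const_nat subn0 mulnC.
rewrite -big_distrl /= (sum_nat_divmod _ (fun _ d => (d != v : nat))) //=.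
by under eq_bigr do rewrite sum_nat_neq //; rewrite sum_nat_const_nat subn0.
Qed.

Lemma sum_digit_sum_neq a n c v : v < q ->
  \sum_(0 <= j < a * q) ((\sum_(l < n.+1) digit q j l + c) %% q != v) = a * q.-1.
Proof.
move=> lt_vq.
have digit_sum_divmod j : \sum_(l < n.+1) digit q j l + c =
    j %% q + (\sum_(l < n) digit q (j %/ q) l + c).
  rewrite big_ord_recl digit0 -addnA; congr (_ + (_ + _)).
  by apply: eq_bigr => l _; rewrite digitS.
under eq_bigr do rewrite digit_sum_divmod.
rewrite (sum_nat_divmod _
  (fun x d => ((d + (\sum_(l < n) digit q x l + c)) %% q != v : nat))) //=.
under eq_bigr do rewrite (sum_nat_mod_shift _ _ (fun d => (d != v : nat))) sum_nat_neq //.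
by rewrite sum_nat_const_nat subn0.
Qed.

End QaryDigits.

Section PDA_B.
Variables q m : nat.
Hypothesis q_gt0 : 0 < q.

Local Notation rows := ((q - 1) * q ^ m).
Local Notation cols := (q * m.+1).

Definition phase u j :=
  if u < m then digit q j u else (\sum_(l < m.+1) digit q j l + 1) %% q.

Definition label u j l :=
  if (u < m) && (l == u) then (digit q j u + digit q j m + 1) %% q else digit q j l.

Definition excluded u (f : nat -> nat) :=
  if u < m then f u else (\sum_(l < m) f l) %% q.

Lemma B_E j k : B q m j k =
  if phase (k %/ q) j == k %% q then Some (from_digits q m (label (k %/ q) j)) else None.
Proof.
rewrite /B /phase /label /from_digits; case: ifP => // _.
by rewrite modnD1_eq ?ltn_pmod.
Qed.

Lemma label_lt u j l : label u j l < q.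
Proof. by rewrite /label; case: ifP; rewrite ?ltn_pmod ?digit_lt. Qed.

Lemma B_Some j k s : B q m j k = Some s ->
  phase (k %/ q) j = k %% q /\ forall l, l < m -> digit q s l = label (k %/ q) j l.
Proof.
rewrite B_E; case: eqP => // -> [<-]; split=> // l.
exact: digit_from_digits (fun i _ => label_lt _ _ i).
Qed.

Lemma B_None j k : (B q m j k == None) = (phase (k %/ q) j != k %% q).
Proof. by rewrite B_E; case: (phase (k %/ q) j =P k %% q). Qed.

Lemma B_lt j k s : B q m j k = Some s -> s < q ^ m.
Proof.
by rewrite B_E; case: eqP => // _ [<-]; apply: from_digits_lt => l _; apply: label_lt.
Qed.

Lemma block_le k : k < cols -> k %/ q <= m.
Proof. by move=> lt_k; rewrite -ltnS ltn_divLR // mulnC. Qed.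

Lemma eq_excluded u f g : (forall l, l < m -> f l = g l) -> excluded u f = excluded u g.
Proof.
rewrite /excluded => eq_fg; case: ifP => [/eq_fg // | _].
by congr (_ %% q); apply: eq_bigr => l _; apply: eq_fg.
Qed.

Lemma phase_neq_excluded u j : j < rows -> u <= m -> phase u j != excluded u (label u j).
Proof.
move=> lt_j le_um; have top := digit_top_lt q_gt0 lt_j (leq_subr 1 q).
have lt_top : 0 < digit q j m + 1 < q by apply/andP; split; lia.
rewrite /phase /excluded /label; case: ltnP => [lt_um | ge_um] /=.
  by rewrite eqxx eq_sym -{2}(modn_small (digit_lt q_gt0 _ _)) -addnA modn_addr_neq.
by rewrite big_ord_recr -addnA /= modn_addr_neq.
Qed.

Lemma phase_excluded_label (u u' : nat) j : u != u' -> u <= m -> u' <= m ->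
  phase u j = excluded u (label u' j).
Proof.
move=> neq_u le_um le_u'm; rewrite /phase /excluded; case: ltnP => [_ | ge_um].
  by rewrite /label (negbTE neq_u) andbF.
have eq_um : u = m by apply/eqP; rewrite eqn_leq le_um.
have lt_u'm : u' < m by rewrite ltn_neqAle -eq_um eq_sym neq_u eq_um.
rewrite big_ord_recr /= (bigD1 (Ordinal lt_u'm)) // [in RHS](bigD1 (Ordinal lt_u'm)) //=.
rewrite [in RHS](eq_bigr (fun l : 'I_m => digit q j l)) => [|l neq_l]; last first.
  by rewrite /label; case: ifP => // /andP[_ eq_l]; case/eqP: neq_l; apply: val_inj; apply/eqP.
have -> : label u' j u' = (digit q j u' + digit q j m + 1) %% q by rewrite /label lt_u'm eqxx.
rewrite modnDml.
by congr (_ %% q); ring.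
Qed.

Lemma rows_le : rows <= q ^ m.+1.
Proof. by rewrite expnSr mulnC leq_mul2l leq_subr orbT. Qed.

Lemma phase_label_inj u j1 j2 : j1 < rows -> j2 < rows -> u <= m ->
  phase u j1 = phase u j2 -> (forall l, l < m -> label u j1 l = label u j2 l) ->
  j1 = j2.
Proof.
move=> lt_j1 lt_j2 le_um eq_phase eq_label.
have eq_low l : l < m -> digit q j1 l = digit q j2 l.
  move=> lt_lm; have := eq_label l lt_lm; rewrite /label.
  case: eqVneq => [eq_lu | _]; last by rewrite andbF.
  by move: eq_phase; rewrite /phase -eq_lu lt_lm.
have eq_top : digit q j1 m = digit q j2 m.
  suff [x] : exists x, x + digit q j1 m + 1 = x + digit q j2 m + 1 %[mod q].
    by move/eqP; rewrite -!addnA eqn_modDl eqn_modDr !modn_small ?digit_lt // => /eqP.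
  case: (ltnP u m) => [lt_um | ge_um].
    by exists (digit q j2 u); have := eq_label u lt_um; rewrite /label lt_um eqxx eq_low.
  exists (\sum_(l < m) digit q j2 l); move: eq_phase; rewrite /phase ltnNge ge_um /=.
  rewrite !big_ord_recr /= (eq_bigr (fun l : 'I_m => digit q j2 l)) // => l _.
  exact: eq_low.
apply: (digit_ext q_gt0 (n := m.+1)) => [||l]; try exact: leq_trans rows_le.
by rewrite ltnS leq_eqVlt => /predU1P[-> // | /eq_low].
Qed.

Lemma phase_cross u1 u2 j1 j2 : j1 < rows -> u1 <= m -> u2 <= m -> u1 != u2 ->
  (forall l, l < m -> label u1 j1 l = label u2 j2 l) -> phase u1 j1 != phase u1 j2.
Proof.
move=> lt_j1 le_u1 le_u2 neq_u eq_label.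
rewrite (phase_excluded_label j2 neq_u) // -(eq_excluded _ eq_label).
exact: phase_neq_excluded.
Qed.

Lemma B_C3 j1 j2 k1 k2 s : j1 < rows -> j2 < rows -> k1 < cols -> k2 < cols ->
  (j1, k1) <> (j2, k2) -> B q m j1 k1 = Some s -> B q m j2 k2 = Some s ->
  [/\ j1 <> j2, k1 <> k2, B q m j1 k2 = None & B q m j2 k1 = None].
Proof.
move=> lt_j1 lt_j2 lt_k1 lt_k2 neq_jk /B_Some[ph1 lab1] /B_Some[ph2 lab2].
have eq_label l : l < m -> label (k1 %/ q) j1 l = label (k2 %/ q) j2 l.
  by move=> lt_lm; rewrite -lab1 ?lab2.
suff [? ? ne12 ne21] : [/\ j1 <> j2, k1 <> k2,
    phase (k2 %/ q) j1 != k2 %% q & phase (k1 %/ q) j2 != k1 %% q].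
  by split=> //; apply/eqP; rewrite B_None.
have [eq_u | neq_u] := eqVneq (k1 %/ q) (k2 %/ q).
  rewrite -eq_u in ph2 eq_label *.
  have [eq_v | neq_v] := eqVneq (k1 %% q) (k2 %% q).
    have eq_k : k1 = k2 by rewrite (divn_eq k1 q) (divn_eq k2 q) eq_u eq_v.
    suff eq_j : j1 = j2 by case: neq_jk; rewrite eq_j eq_k.
    by apply: (phase_label_inj lt_j1 lt_j2 (block_le lt_k1)); rewrite // ph1 ph2.
  rewrite ph1 ph2; split=> [eq_j | eq_k | // | ]; last by rewrite eq_sym.
    by move: neq_v; rewrite -ph1 -ph2 eq_j eqxx.
  by move: neq_v; rewrite eq_k eqxx.
have ne1 := phase_cross lt_j1 (block_le lt_k1) (block_le lt_k2) neq_u eq_label.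
have ne2 : phase (k2 %/ q) j2 != phase (k2 %/ q) j1.
  apply: phase_cross (block_le lt_k2) (block_le lt_k1) _ _ => [//||l lt_lm].
    by rewrite eq_sym.
  by rewrite eq_label.
rewrite ph1 in ne1; rewrite ph2 in ne2.
split=> [eq_j | eq_k | | ]; rewrite 1?eq_sym //.
  by move: ne1; rewrite -eq_j ph1 eqxx.
by move: neq_u; rewrite eq_k eqxx.
Qed.

Hypothesis m_gt0 : 0 < m.

Lemma sum_col_None k : k < cols ->
  \sum_(j < rows) (B q m j k == None) = (q - 1) ^ 2 * q ^ m.-1.
Proof.
move=> lt_k; rewrite -(big_mkord xpredT (fun j => (B q m j k == None : nat))).
under eq_bigr do rewrite B_None.
have lt_v : k %% q < q by rewrite ltn_pmod.
rewrite /phase; case: (ltnP (k %/ q) m) => [lt_um | ge_um].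
  rewrite -[in X in \sum_(0 <= _ < X) _](subnK lt_um) expnD mulnA sum_digit_neq //.
  have -> : m.-1 = m - (k %/ q).+1 + k %/ q by lia.
  by rewrite expnD -!subn1; ring.
rewrite -[in X in \sum_(0 <= _ < X) _](prednK m_gt0) expnSr mulnA sum_digit_sum_neq //.
by rewrite -!subn1; ring.
Qed.

Lemma sum_col_Some_le k (s : nat) : k < cols ->
  \sum_(j < rows) (B q m j k == Some s) <= (k %% q != excluded (k %/ q) (digit q s)).
Proof.
move=> lt_k; have [eq_v | _] := eqVneq (k %% q) (excluded (k %/ q) (digit q s)).
  rewrite leqn0 sum_nat_eq0; apply/forallP => j /=; rewrite eqb0.
  apply/eqP => /B_Some[ph lab]; move: (phase_neq_excluded (ltn_ord j) (block_le lt_k)).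
  by rewrite ph -(eq_excluded _ lab) eq_v eqxx.
rewrite -card_set_sum; apply/card_le1_eqP => j1 j2; rewrite !inE.
move=> /eqP/B_Some[ph1 lab1] /eqP/B_Some[ph2 lab2]; apply: ord_inj.
apply: (phase_label_inj (ltn_ord j2) (ltn_ord j1) (block_le lt_k)); first by rewrite ph1 ph2.
by move=> l lt_lm; rewrite -lab1 ?lab2.
Qed.

Lemma sum_Some_le (s : nat) :
  \sum_(k < cols) \sum_(j < rows) (B q m j k == Some s) <= (q - 1) * m.+1.
Proof.
apply: (@leq_trans (\sum_(k < cols) (k %% q != excluded (k %/ q) (digit q s)))).
  by apply: leq_sum => k _; apply: sum_col_Some_le.
rewrite -(big_mkord xpredT (fun k => (k %% q != excluded (k %/ q) (digit q s) : nat))).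
rewrite mulnC (sum_nat_divmod _ (fun u v => (v != excluded u (digit q s) : nat))) //=.
rewrite (eq_bigr (fun _ => q.-1)) => [|u _]; last first.
  by apply: sum_nat_neq; rewrite /excluded; case: ifP; rewrite ?digit_lt ?ltn_pmod.
by rewrite sum_nat_const_nat subn0 subn1 mulnC.
Qed.

Lemma sum_col_Some k : k < cols -> \sum_(j < rows) (B q m j k != None) = (q - 1) * q ^ m.-1.
Proof.
move=> lt_k; apply/eqP; rewrite -(eqn_add2r ((q - 1) ^ 2 * q ^ m.-1)).
rewrite -{1}(sum_col_None lt_k) -big_split /=.
rewrite (eq_bigr (fun _ => 1)) => [|j _]; last by case: (B q m j k).
rewrite sum_nat_const card_ord muln1 -[in X in X == _](prednK m_gt0) expnS.
apply/eqP; move: (q ^ m.-1) => x; nia.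
Qed.

Lemma sum_Some_total :
  \sum_(s < q ^ m) \sum_(k < cols) \sum_(j < rows) (B q m j k == Some (s : nat)) =
  q ^ m * ((q - 1) * m.+1).
Proof.
rewrite exchange_big /=.
rewrite (eq_bigr (fun k : 'I_cols => \sum_(j < rows) (B q m j k != None))) => [|k _]; last first.
  rewrite exchange_big; apply: eq_bigr => j _ /=.
  case E: (B q m j k) => [s|] /=; last by rewrite big1.
  rewrite -big_mkcond (eq_bigl (fun i : 'I_(q ^ m) => i == s :> nat)) => [|i].
    by rewrite (big_ord1_eq _ (fun _ => 1)) (B_lt E).
  by rewrite (inj_eq Some_inj) eq_sym.
rewrite (eq_bigr (fun _ : 'I_cols => (q - 1) * q ^ m.-1)) => [|k _]; last exact: sum_col_Some.
have -> : q ^ m = q * q ^ m.-1 by rewrite -expnS prednK.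
by rewrite sum_nat_const card_ord; ring.
Qed.

Lemma sum_Some (s : nat) : s < q ^ m ->
  \sum_(k < cols) \sum_(j < rows) (B q m j k == Some s) = (q - 1) * m.+1.
Proof.
move=> lt_s; have := leqif_sum (P := xpredT) (fun (t : 'I_(q ^ m)) _ => leqif_eq (sum_Some_le t)).
rewrite sum_Some_total sum_nat_const card_ord => -[_].
by rewrite eqxx => /esym/forallP/(_ (Ordinal lt_s))/eqP.
Qed.

End PDA_B.

Theorem theorem5 (q m : nat) (hq : 2 <= q) (hm : 0 < m) :
  regular_PDA ((q - 1) * m.+1) (q * m.+1) ((q - 1) * q ^ m)
    ((q - 1) ^ 2 * q ^ m.-1) (q ^ m) (B q m)
  /\ rate ((q - 1) * q ^ m) (q ^ m) = (((q - 1)%N)%:Q)^-1%R.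
Proof.
have q_gt0 := ltnW hq; split.
  split=> [j k | k | s lt_s | j1 j2 k1 k2 s neq_jk E1 E2].
  - by case E: (B q m j k) => [s|] //; apply: B_lt E.
  - by rewrite card_set_sum sum_col_None.
  - rewrite card_set_sum.
    rewrite -(pair_bigA _ (fun (j : 'I_((q - 1) * q ^ m)) (k : 'I_(q * m.+1)) =>
      (B q m j k == Some s : nat))).
    by rewrite exchange_big sum_Some.
  - have neq_jk' : (val j1, val k1) <> (val j2, val k2).
      by case=> /val_inj eq_j /val_inj eq_k; apply: neq_jk; rewrite eq_j eq_k.
    have [neq_j neq_k -> ->] :=
      B_C3 q_gt0 (ltn_ord j1) (ltn_ord j2) (ltn_ord k1) (ltn_ord k2) neq_jk' E1 E2.
    by split=> // [/(congr1 val) | /(congr1 val)].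
have q1_neq0 : ((q - 1)%N%:Q != 0)%R by rewrite intr_eq0 eqz_nat subn_eq0 -ltnNge.
have qm_neq0 : ((q ^ m)%N%:Q != 0)%R by rewrite intr_eq0 eqz_nat expn_eq0 negb_and -lt0n q_gt0.
by rewrite /rate PoszM intrM; field; rewrite q1_neq0 qm_neq0.
Qed.
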